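(* Suppose $\mathbf A$ is irreducible. Then for all $s\ge0$, $\phi^s$ is quasimultiplicative on $\mathbf S$.
   Context: $\mathbf A=\{A_i\}_{i\in\mathcal I}\subset\mathrm{SL}(3,\mathbb R)$ with $\mathcal I$ finite or countable, generating the semigroup $\mathbf S$; $A_u=A_{i_1}\cdots A_{i_m}$ for a finite word $u$, $\mathcal I^*$ the set of finite words. $\mathbf A$ is irreducible if no proper nonzero linear subspace of $\mathbb R^3$ is invariant under every $A_i$. For singular values $\alpha_1\ge\alpha_2\ge\alpha_3$ of $A$ and $s\ge0$: $\phi^s(A)=(\alpha_2/\alpha_1)^s$ if $0\le s\le1$; $\frac{\alpha_2}{\alpha_1}(\frac{\alpha_3}{\alpha_1})^{s-1}$ if $1\le s\le2$; $(\frac{\alpha_2\alpha_3}{\alpha_1^2})^s$ if $s\ge2$. A function $\phi:\mathbf S\to\mathbb R_{>0}$ is quasimultiplicative on $\mathbf S$ if there exist a finite $\Gamma\subset\mathcal I^*$ and $c>0$ such that for all $u,w\in\mathcal I^*$ there is $k\in\Gamma$ with $\phi(A_{ukw})\ge c\,\phi(A_u)\phi(A_w)$. *)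

From HB Require Import structures.
From mathcomp Require Import all_boot all_order all_algebra.
From mathcomp Require Import all_classical all_reals all_analysis.
Set Implicit Arguments. Unset Strict Implicit. Unset Printing Implicit Defensive.
Import Order.TTheory GRing.Theory Num.Theory.
Local Open Scope ring_scope.
Local Open Scope classical_set_scope.

Section Defs.
Variable R : realType.

Definition word_mx (I : Type) (A : I -> 'M[R]_3) (u : seq I) : 'M[R]_3 :=
  foldr (fun i M => A i *m M) 1%:M u.

(* Irreducibility: no proper nonzero subspace W of R^3 (column vectors) with
   A_i W <= W for all i.  W is the row space of V; A_i W <= W in column
   convention is (V *m (A_i)^T <= V)%MS, i.e. stablemx V (A i)^T. *)
Definition irreducible (I : Type) (A : I -> 'M[R]_3) : Prop :=
  forall V : 'M[R]_3, (0 < \rank V < 3)%N -> ~ (forall i, stablemx V (A i)^T).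

Definition orthogonal3 (U : 'M[R]_3) : Prop := U *m U^T = 1%:M.

Definition is_singular_values (A : 'M[R]_3) (a : R * R * R) : Prop :=
  let: (a1, a2, a3) := a in
  [/\ a2 <= a1, a3 <= a2, 0 <= a3 &
   exists U V : 'M[R]_3, [/\ orthogonal3 U, orthogonal3 V &
     A = U *m diag_mx (\row_(i < 3) [:: a1; a2; a3]`_i) *m V]].

(* The singular values (well defined since the SVD exists and the ordered
   singular values are unique). *)
Definition singvals (A : 'M[R]_3) : R * R * R :=
  xget (0, 0, 0) [set a | is_singular_values A a].

Definition phi (s : R) (A : 'M[R]_3) : R :=
  let: (a1, a2, a3) := singvals A in
  if s <= 1 then (a2 / a1) `^ s
  else if s <= 2 then (a2 / a1) * (a3 / a1) `^ (s - 1)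
  else (a2 * a3 / a1 ^+ 2) `^ s.

Definition quasimultiplicative (I : eqType) (A : I -> 'M[R]_3)
    (f : 'M[R]_3 -> R) : Prop :=
  exists (Gamma : seq (seq I)) (c : R), 0 < c /\
    forall u w : seq I, exists2 k, k \in Gamma &
      c * f (word_mx A u) * f (word_mx A w) <= f (word_mx A (u ++ k ++ w)).

End Defs.

(* For det M = 1 put |M| = a1(M), the largest singular value, so that
   |M^-1| = 1 / a3(M).  Since a1 a2 a3 = 1, phi^s(M) = |M^-1|^p / |M|^q for exponents
   p, q >= 0 depending only on s.  The norm is submultiplicative, which bounds
   |A_(ukw)| by K |A_u| |A_w| for k in any finite set of words.  In the other direction
   A_(ukw)^-1 = A_w^-1 A_k^-1 A_u^-1.  For nonzero P and Q some word k has
   P A_k^-1 Q <> 0, since otherwise the row vectors y with y (P A_k^-1)^T = 0 for all k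
   would form a nonzero proper subspace invariant under every (A_i^-1)^T, contradicting
   irreducibility; compactness of the set of pairs (P, Q) of unit Frobenius norm turns
   this into a uniform bound c |P| |Q| <= |P A_k^-1 Q| over finitely many words k.
   The singular value decomposition itself is obtained by maximizing |x N| on the unit
   sphere and then on the orthogonal complement of the maximizer. *)
From HB Require Import structures.
From mathcomp Require Import all_boot all_order all_algebra.
From mathcomp Require Import all_classical all_reals all_analysis.
From mathcomp Require Import ring lra.
Import Order.TTheory GRing.Theory Num.Theory.
Import numFieldNormedType.Exports.
Set Implicit Arguments. Unset Strict Implicit. Unset Printing Implicit Defensive.
Local Open Scope ring_scope.

Section RowVectorGeometry.
Variable R : realType.
Implicit Types (m n : nat).

Definition vdot n (x y : 'rV[R]_n) : R := \sum_i x 0 i * y 0 i.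
Definition sqnorm n (x : 'rV[R]_n) : R := vdot x x.
Definition frob m n (M : 'M[R]_(m, n)) : R := \sum_i sqnorm (row i M).

Lemma vdotC n (x y : 'rV[R]_n) : vdot x y = vdot y x.
Proof. by apply: eq_bigr => i _; rewrite mulrC. Qed.

Lemma vdotE n (x y : 'rV[R]_n) : vdot x y = (x *m y^T) 0 0.
Proof. by rewrite mxE; apply: eq_bigr => i _; rewrite mxE. Qed.

Lemma mulmx_trE m n p (X : 'M[R]_(m, n)) (Y : 'M[R]_(p, n)) i j :
  (X *m Y^T) i j = vdot (row i X) (row j Y).
Proof. by rewrite mxE; apply: eq_bigr => k _; rewrite !mxE. Qed.

Lemma vdotDl n (x y z : 'rV[R]_n) : vdot (x + y) z = vdot x z + vdot y z.
Proof. by rewrite -big_split; apply: eq_bigr => i _; rewrite mxE mulrDl. Qed.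

Lemma vdotZl n a (x y : 'rV[R]_n) : vdot (a *: x) y = a * vdot x y.
Proof. by rewrite mulr_sumr; apply: eq_bigr => i _; rewrite mxE mulrA. Qed.

Lemma sqnormE n (x : 'rV[R]_n) : sqnorm x = \sum_i x 0 i ^+ 2.
Proof. by []. Qed.

Lemma sqnormZ n a (x : 'rV[R]_n) : sqnorm (a *: x) = a ^+ 2 * sqnorm x.
Proof. by rewrite mulr_sumr; apply: eq_bigr => i _; rewrite !mxE; ring. Qed.

Lemma sqnormDZ n (x y : 'rV[R]_n) t :
  sqnorm (x + t *: y) = sqnorm x + 2 * t * vdot x y + t ^+ 2 * sqnorm y.
Proof.
rewrite /sqnorm /vdot !mulr_sumr -!big_split /=.
by apply: eq_bigr => i _; rewrite !mxE; ring.
Qed.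

Lemma sqnorm_ge0 n (x : 'rV[R]_n) : 0 <= sqnorm x.
Proof. by apply: sumr_ge0 => i _; rewrite -expr2 sqr_ge0. Qed.

Lemma sqnorm_eq0 n (x : 'rV[R]_n) : (sqnorm x == 0) = (x == 0).
Proof.
rewrite psumr_eq0; last by move=> i _; rewrite -expr2 sqr_ge0.
apply/allP/eqP => [x0|->]; last by move=> i _ /=; rewrite mxE mulr0.
apply/rowP => i; rewrite mxE; apply/eqP.
by have := x0 i (mem_index_enum _); rewrite /= mulf_eq0 orbb.
Qed.

Lemma sqnorm_gt0 n (x : 'rV[R]_n) : (0 < sqnorm x) = (x != 0).
Proof. by rewrite lt_def sqnorm_eq0 sqnorm_ge0 andbT. Qed.

Lemma sqr_coord_le_sqnorm n (x : 'rV[R]_n) i : x 0 i ^+ 2 <= sqnorm x.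
Proof.
rewrite sqnormE (bigD1 i) //= lerDl.
by apply: sumr_ge0 => j _; exact: sqr_ge0.
Qed.

Lemma sqnorm_delta n (j : 'I_n) : sqnorm (delta_mx 0 j : 'rV[R]_n) = 1.
Proof.
rewrite sqnormE (bigD1 j) //= big1 ?addr0 => [|i /negbTE ij].
  by rewrite mxE !eqxx expr1n.
by rewrite mxE ij andbF expr0n.
Qed.

Lemma vdot_sqr_le n (x y : 'rV[R]_n) : vdot x y ^+ 2 <= sqnorm x * sqnorm y.
Proof.
have [->|y0] := eqVneq y 0.
  by rewrite /vdot big1 => [|i _]; rewrite ?mxE ?mulr0 // expr0n /= mulr_ge0 ?sqnorm_ge0.
have gy : 0 < sqnorm y by rewrite sqnorm_gt0.
have := sqnorm_ge0 (x + (- (vdot x y / sqnorm y)) *: y).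
rewrite sqnormDZ.
have -> : sqnorm x + 2 * - (vdot x y / sqnorm y) * vdot x y
    + (- (vdot x y / sqnorm y)) ^+ 2 * sqnorm y = sqnorm x - vdot x y ^+ 2 / sqnorm y.
  by field; rewrite gt_eqF.
by rewrite subr_ge0 ler_pdivrMr.
Qed.

Lemma sqnorm_mulmx_orthogonal n (x : 'rV[R]_n) (W : 'M[R]_n) :
  W *m W^T = 1%:M -> sqnorm (x *m W) = sqnorm x.
Proof. by move=> WWt; rewrite /sqnorm !vdotE trmx_mul mulmxA -(mulmxA x) WWt mulmx1. Qed.

Lemma sqnorm_mul_diag n (x d : 'rV[R]_n) :
  sqnorm (x *m diag_mx d) = \sum_i x 0 i ^+ 2 * d 0 i ^+ 2.
Proof. by apply: eq_bigr => i _; rewrite mul_mx_diag mxE; ring. Qed.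

Lemma sqnorm_row_mx m n (x : 'rV[R]_m) (y : 'rV[R]_n) :
  sqnorm (row_mx x y) = sqnorm x + sqnorm y.
Proof.
rewrite /sqnorm /vdot big_split_ord /=.
by congr (_ + _); apply: eq_bigr => i _; rewrite (row_mxEl, row_mxEr).
Qed.

Definition normalize n (x : 'rV[R]_n) := (Num.sqrt (sqnorm x))^-1 *: x.

Lemma sqnorm_normalize n (x : 'rV[R]_n) : x != 0 -> sqnorm (normalize x) = 1.
Proof.
rewrite -sqnorm_gt0 => gx.
by rewrite sqnormZ exprVn sqr_sqrtr ?ltW // mulVf ?gt_eqF.
Qed.

Lemma frob_ge0 m n (M : 'M[R]_(m, n)) : 0 <= frob M.
Proof. by apply: sumr_ge0 => i _; exact: sqnorm_ge0. Qed.

Lemma frob_eq0 m n (M : 'M[R]_(m, n)) : (frob M == 0) = (M == 0).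
Proof.
rewrite psumr_eq0; last by move=> i _; exact: sqnorm_ge0.
apply/allP/eqP => [M0|-> i _]; last by rewrite /= row0 sqnorm_eq0.
apply/row_matrixP => i; rewrite row0; apply/eqP.
by rewrite -sqnorm_eq0; exact: M0 (mem_index_enum _).
Qed.

Lemma frob_gt0 m n (M : 'M[R]_(m, n)) : (0 < frob M) = (M != 0).
Proof. by rewrite lt_def frob_eq0 frob_ge0 andbT. Qed.

Lemma frobZ m n a (M : 'M[R]_(m, n)) : frob (a *: M) = a ^+ 2 * frob M.
Proof.
rewrite mulr_sumr; apply: eq_bigr => i _; rewrite -sqnormZ.
by congr sqnorm; apply/rowP => j; rewrite !mxE.
Qed.

Lemma frob_normalize m n (M : 'M[R]_(m, n)) :
  M != 0 -> frob ((Num.sqrt (frob M))^-1 *: M) = 1.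
Proof.
rewrite -frob_gt0 => gM.
by rewrite frobZ exprVn sqr_sqrtr ?ltW // mulVf ?gt_eqF.
Qed.

Lemma sqnorm_mxvec m n (M : 'M[R]_(m, n)) : sqnorm (mxvec M) = frob M.
Proof.
transitivity (\sum_p M p.1 p.2 ^+ 2).
  rewrite sqnormE (reindex _ (curry_mxvec_bij m n)) /=.
  by apply: eq_bigr => -[i j] _; rewrite mxvecE.
rewrite -(pair_bigA _ (fun i j => M i j ^+ 2)); apply: eq_bigr => i _.
by apply: eq_bigr => j _; rewrite mxE expr2.
Qed.

Lemma frob_trmx m n (M : 'M[R]_(m, n)) : frob M^T = frob M.
Proof.
rewrite /frob (eq_bigr (fun j => \sum_i M i j ^+ 2)) => [|j _]; last first.
  by apply: eq_bigr => i _; rewrite !mxE expr2.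
rewrite exchange_big; apply: eq_bigr => i _.
by apply: eq_bigr => j _; rewrite mxE expr2.
Qed.

Lemma sqnorm_mul_le_frob m n (x : 'rV[R]_n) (M : 'M[R]_(m, n)) :
  sqnorm (x *m M^T) <= frob M * sqnorm x.
Proof.
rewrite sqnormE mulr_suml; apply: ler_sum => i _.
have -> : (x *m M^T) 0 i = vdot (row i M) x.
  by rewrite vdotC mxE; apply: eq_bigr => j _; rewrite !mxE.
exact: vdot_sqr_le.
Qed.

Lemma frob_colsE n (M : 'M[R]_n) : frob M = \sum_j sqnorm (delta_mx 0 j *m M^T).
Proof. by rewrite -frob_trmx; apply: eq_bigr => j _; rewrite rowE. Qed.

End RowVectorGeometry.

Section RayleighQuotient.
Variables (R : realType) (n : nat).

Lemma linear_le_quadratic_eq0 (b k : R) : (forall t, 2 * t * b <= t ^+ 2 * k) -> b = 0.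
Proof.
move=> H; apply/eqP/negPn/negP => b0.
have e0 : 0 < `|k| + 1 by have := normr_ge0 k; lra.
have t0 : 0 < (b / (`|k| + 1)) ^+ 2.
  by rewrite lt_def sqr_ge0 sqrf_eq0 andbT mulf_neq0 // invr_eq0 gt_eqF.
have := H (b / (`|k| + 1)).
have -> : 2 * (b / (`|k| + 1)) * b = (b / (`|k| + 1)) ^+ 2 * (2 * (`|k| + 1)).
  by field; rewrite gt_eqF.
by rewrite ler_pM2l //; have := ler_norm k; lra.
Qed.

Lemma orthogonal_comb_neq0 (v w : 'rV[R]_n) t :
  sqnorm v = 1 -> vdot v w = 0 -> v + t *: w != 0.
Proof.
move=> v1 vw; rewrite -sqnorm_gt0 sqnormDZ v1 vw.
by have := sqnorm_ge0 w; have := sqr_ge0 t; nra.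
Qed.

Lemma rayleigh_max_orthogonal p (N : 'M[R]_(n, p)) (v w : 'rV[R]_n) :
  sqnorm v = 1 -> vdot v w = 0 ->
  (forall t, sqnorm (normalize (v + t *: w) *m N) <= sqnorm (v *m N)) ->
  vdot (v *m N) (w *m N) = 0.
Proof.
move=> v1 vw vmax; apply: (@linear_le_quadratic_eq0 _
  (sqnorm (v *m N) * sqnorm w - sqnorm (w *m N))) => t.
have vw_neq0 := orthogonal_comb_neq0 t v1 vw.
have := vmax t; rewrite /normalize -scalemxAl sqnormZ exprVn.
rewrite sqr_sqrtr ?sqnorm_ge0 // mulrC ler_pdivrMr ?sqnorm_gt0 //.
by rewrite mulmxDl -scalemxAl !sqnormDZ v1 vw; lra.
Qed.

End RayleighQuotient.

Section ContinuityCompactness.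
Variable R : realType.
Local Open Scope classical_set_scope.

Lemma continuous_sum (T : topologicalType) n (F : 'I_n -> T -> R) :
  (forall i, continuous (F i)) -> continuous (fun x => \sum_i F i x).
Proof.
elim: n F => [|n IH] F cF.
  by under eq_fun do rewrite big_ord0; exact: cst_continuous.
under eq_fun do rewrite big_ord_recr /=.
move=> x; apply: continuousD; last exact: cF.
exact: (IH (fun i => F (widen_ord (leqnSn n) i))).
Qed.

Definition entrywise_continuous (T : topologicalType) m n (F : T -> 'M[R]_(m, n)) :=
  forall i j, continuous (fun x => F x i j).

Lemma entrywise_continuous_cst (T : topologicalType) m n (M : 'M[R]_(m, n)) :
  entrywise_continuous (fun _ : T => M).
Proof. by move=> i j; exact: cst_continuous. Qed.

Lemma entrywise_continuous_id m n : entrywise_continuous (fun x : 'M[R]_(m, n) => x).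
Proof. by move=> i j; exact: coord_continuous. Qed.

Lemma entrywise_continuous_mul (T : topologicalType) m n p
    (F : T -> 'M[R]_(m, n)) (G : T -> 'M[R]_(n, p)) :
  entrywise_continuous F -> entrywise_continuous G ->
  entrywise_continuous (fun x => F x *m G x).
Proof.
move=> cF cG i j; under eq_fun do rewrite mxE.
by apply: continuous_sum => k x; apply: continuousM; [exact: cF | exact: cG].
Qed.

Lemma entrywise_continuous_vec_lsubmx m n p q :
  entrywise_continuous (fun x : 'rV[R]_(m * n + p * q) => vec_mx (lsubmx x)).
Proof. by move=> i j; under eq_fun do rewrite !mxE; exact: coord_continuous. Qed.

Lemma entrywise_continuous_vec_rsubmx m n p q :
  entrywise_continuous (fun x : 'rV[R]_(m * n + p * q) => vec_mx (rsubmx x)).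
Proof. by move=> i j; under eq_fun do rewrite !mxE; exact: coord_continuous. Qed.

Lemma continuous_sqnorm (T : topologicalType) n (F : T -> 'rV[R]_n) :
  entrywise_continuous F -> continuous (fun x => sqnorm (F x)).
Proof. by move=> cF; apply: continuous_sum => i x; apply: continuousM; exact: cF. Qed.

Lemma continuous_frob (T : topologicalType) m n (F : T -> 'M[R]_(m, n)) :
  entrywise_continuous F -> continuous (fun x => frob (F x)).
Proof.
move=> cF; apply: continuous_sum => i; apply: continuous_sqnorm => k j.
by under eq_fun do rewrite mxE; exact: cF.
Qed.

Lemma continuous_vdotl n (y : 'rV[R]_n) : continuous (fun x => vdot x y).
Proof.
apply: continuous_sum => i x.
by apply: continuousM; [exact: coord_continuous | exact: cst_continuous].
Qed.

Lemma closed_eq_continuous (T : topologicalType) (f : T -> R) a :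
  continuous f -> closed [set x | f x = a].
Proof.
move=> cf; rewrite -[X in closed X]/(f @^-1` [set y | y = a]).
by apply: preimage_closed (fun x _ => cf x) _; exact: closed_eq.
Qed.

Lemma open_gt_continuous (T : topologicalType) (f : T -> R) a :
  continuous f -> open [set x | a < f x].
Proof.
move=> cf; rewrite -[X in open X]/(f @^-1` [set y | a < y]).
by apply: open_comp (fun x _ => cf x) _; exact: open_gt.
Qed.

Lemma compact_sqnorm_bounded n (K : set 'rV[R]_n) r :
  closed K -> (forall x, K x -> sqnorm x <= r) -> compact K.
Proof.
move=> cK Kr.
have cbox := @rV_compact R n (fun=> `[- (r + 1), r + 1]%classic)
  (fun=> @segment_compact R _ _).
apply: subclosed_compact cK cbox _ => x Kx i /=.
have := le_trans (sqr_coord_le_sqnorm x i) (Kr x Kx).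
by rewrite in_itv /= => h; apply/andP; split; nra.
Qed.

Lemma compact_argmax (T : topologicalType) (K : set T) (f : T -> R) :
  K !=set0 -> compact K -> continuous f ->
  exists2 c, K c & forall t, K t -> f t <= f c.
Proof.
move=> K0 cK cf; have [c Kc cmax] := compact_EVT_max K0 cK (continuous_subspaceT cf).
by exists c; [rewrite inE in Kc | move=> t Kt; apply: cmax; rewrite inE].
Qed.

End ContinuityCompactness.

Section Dimension3.
Variable R : realType.
Implicit Types (x y v w : 'rV[R]_3).

Definition i0 : 'I_3 := @Ordinal 3 0 isT.
Definition i1 : 'I_3 := @Ordinal 3 1 isT.
Definition i2 : 'I_3 := @Ordinal 3 2 isT.

Lemma ord3P (i : 'I_3) : [\/ i = i0, i = i1 | i = i2].
Proof.
by case: i => [[|[|[|//]]] ?]; [constructor 1|constructor 2|constructor 3]; exact: val_inj.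
Qed.

Lemma sum3 (F : 'I_3 -> R) : \sum_(i < 3) F i = F i0 + F i1 + F i2.
Proof.
rewrite !big_ord_recr big_ord0 /= add0r.
by congr (F _ + F _ + F _); apply: val_inj.
Qed.

Lemma prod3 (F : 'I_3 -> R) : \prod_(i < 3) F i = F i0 * F i1 * F i2.
Proof.
rewrite !big_ord_recr big_ord0 /= mul1r.
by congr (F _ * F _ * F _); apply: val_inj.
Qed.

Lemma vdot3 x y : vdot x y = x 0 i0 * y 0 i0 + x 0 i1 * y 0 i1 + x 0 i2 * y 0 i2.
Proof. exact: sum3. Qed.

Definition cross x y : 'rV[R]_3 :=
  \row_(i < 3) [:: x 0 i1 * y 0 i2 - x 0 i2 * y 0 i1;
                  x 0 i2 * y 0 i0 - x 0 i0 * y 0 i2;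
                  x 0 i0 * y 0 i1 - x 0 i1 * y 0 i0]`_i.

Lemma vdot_crossl x y : vdot (cross x y) x = 0.
Proof. by rewrite vdot3 !mxE /=; ring. Qed.

Lemma vdot_crossr x y : vdot (cross x y) y = 0.
Proof. by rewrite vdot3 !mxE /=; ring. Qed.

Lemma sqnorm_cross x y : sqnorm (cross x y) = sqnorm x * sqnorm y - vdot x y ^+ 2.
Proof. by rewrite /sqnorm !vdot3 !mxE /=; ring. Qed.

Lemma exists_unit_orthogonal v : v != 0 -> exists w, sqnorm w = 1 /\ vdot w v = 0.
Proof.
move=> v0.
have sum_cross : \sum_k sqnorm (cross v (delta_mx 0 k)) = 2 * sqnorm v.
  by rewrite sum3 /sqnorm !vdot3 !mxE /=; ring.
have : \sum_k sqnorm (cross v (delta_mx 0 k)) != 0.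
  by rewrite sum_cross gt_eqF // mulr_gt0 // sqnorm_gt0.
rewrite psumr_neq0 => [/hasP [k _ /andP [_ k0]]|k _]; last exact: sqnorm_ge0.
exists (normalize (cross v (delta_mx 0 k))).
by rewrite vdotZl vdot_crossl mulr0 sqnorm_normalize // -sqnorm_gt0.
Qed.

End Dimension3.

Section Diagonalization.
Variable R : realType.
Local Open Scope classical_set_scope.
Implicit Types (x y v w : 'rV[R]_3) (N : 'M[R]_3).

Lemma orthonormal_triple_diagonalizing N : exists v1 v2 v3 : 'rV[R]_3,
  [/\ [/\ sqnorm v1 = 1, sqnorm v2 = 1 & sqnorm v3 = 1],
      [/\ vdot v1 v2 = 0, vdot v1 v3 = 0 & vdot v2 v3 = 0],
      [/\ vdot (v1 *m N) (v2 *m N) = 0, vdot (v1 *m N) (v3 *m N) = 0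
        & vdot (v2 *m N) (v3 *m N) = 0] &
      sqnorm (v2 *m N) <= sqnorm (v1 *m N) /\ sqnorm (v3 *m N) <= sqnorm (v2 *m N)].
Proof.
have cF : continuous (fun x : 'rV[R]_3 => sqnorm (x *m N)).
  exact/continuous_sqnorm/entrywise_continuous_mul/entrywise_continuous_cst/entrywise_continuous_id.
pose S1 := [set x : 'rV[R]_3 | sqnorm x = 1].
have cS1 : closed S1.
  exact/closed_eq_continuous/continuous_sqnorm/entrywise_continuous_id.
have S1_normalize v w t : sqnorm v = 1 -> vdot v w = 0 -> S1 (normalize (v + t *: w)).
  by move=> v1 vw; apply: sqnorm_normalize; exact: orthogonal_comb_neq0.
have S1e : S1 (delta_mx 0 i0) by exact: sqnorm_delta.
have S1le x : S1 x -> sqnorm x <= 1 by move=> ->.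
have [v1 S1v1 v1max] :=
  compact_argmax (ex_intro _ _ S1e) (compact_sqnorm_bounded cS1 S1le) cF.
pose S2 := S1 `&` [set x | vdot x v1 = 0].
have cS2 : closed S2.
  by apply: closedI cS1 _; apply: closed_eq_continuous; exact: continuous_vdotl.
have [w [w1 wv1]] : exists w, sqnorm w = 1 /\ vdot w v1 = 0.
  by apply: exists_unit_orthogonal; rewrite -sqnorm_gt0 S1v1.
have S2le x : S2 x -> sqnorm x <= 1 by case=> ->.
have [v2 [S1v2 v2v1] v2max] := compact_argmax (ex_intro _ w (conj w1 wv1))
  (compact_sqnorm_bounded cS2 S2le) cF.
pose v3 := cross v1 v2.
have v1v2 : vdot v1 v2 = 0 by rewrite vdotC.
have v1v3 : vdot v1 v3 = 0 by rewrite vdotC vdot_crossl.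
have v2v3 : vdot v2 v3 = 0 by rewrite vdotC vdot_crossr.
have S1v3 : sqnorm v3 = 1 by rewrite sqnorm_cross S1v1 S1v2 v1v2 expr0n /= subr0 mul1r.
exists v1, v2, v3; split=> //; split.
- by apply: rayleigh_max_orthogonal => // t; exact/v1max/S1_normalize.
- by apply: rayleigh_max_orthogonal => // t; exact/v1max/S1_normalize.
- apply: rayleigh_max_orthogonal => // t; apply: v2max; split; first exact: S1_normalize.
  by rewrite /= vdotZl vdotDl vdotZl v2v1 (vdotC v3) v1v3 !mulr0 addr0 mulr0.
- exact: v1max.
- by apply: v2max; split; rewrite //= vdotC.
Qed.

Lemma orthonormal_basis_diagonalizing N : exists (V : 'M[R]_3) (d : 'rV[R]_3),
  [/\ V *m V^T = 1%:M, V *m N *m (V *m N)^T = diag_mx d,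
      d 0 i1 <= d 0 i0 & d 0 i2 <= d 0 i1].
Proof.
have [v1 [v2 [v3 [[u1 u2 u3] [h12 h13 h23] [p12 p13 p23] [le21 le32]]]]] :=
  orthonormal_triple_diagonalizing N.
pose vs := [:: v1; v2; v3].
move: u1 u2 u3; rewrite /sqnorm => u1 u2 u3.
exists (\matrix_(i < 3) vs`_i), (\row_(i < 3) sqnorm (vs`_i *m N)); split.
- apply/matrixP => i j; rewrite mulmx_trE !rowK !mxE.
  by case: (ord3P i) => ->; case: (ord3P j) => -> /=; rewrite // vdotC.
- apply/matrixP => i j; rewrite mulmx_trE !row_mul !rowK !mxE.
  by case: (ord3P i) => ->; case: (ord3P j) => -> /=; rewrite ?mulr1n ?mulr0n // vdotC.
- by rewrite !mxE.
- by rewrite !mxE.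
Qed.

End Diagonalization.

Section SingularValueDecomposition.
Variable R : realType.
Implicit Types (x y : 'rV[R]_3) (M : 'M[R]_3).

Lemma row_unit_neq0 n (G : 'M[R]_n) j : G \in unitmx -> row j G != 0.
Proof.
move=> uG; apply/eqP => /(congr1 (mulmx^~ (invmx G))).
rewrite rowE mulmxK // mul0mx => /rowP/(_ j).
by rewrite !mxE !eqxx /= => /eqP; rewrite oner_eq0.
Qed.

Lemma singular_values_exist M : M \in unitmx -> exists a, is_singular_values M a.
Proof.
move=> uM; have [V [d [VVt GGt d10 d21]]] := orthonormal_basis_diagonalizing M^T.
have VtV : V^T *m V = 1%:M := mulmx1C VVt.
set G := V *m M^T in GGt.
have uG : G \in unitmx.
  rewrite unitmx_mul unitmx_tr uM andbT unitmxE.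
  by apply/unitrP; exists (\det V^T); rewrite -!det_mulmx VVt VtV det1.
have d_gt0 j : 0 < d 0 j.
  move/matrixP/(_ j j): GGt; rewrite mulmx_trE mxE eqxx mulr1n => <-.
  by rewrite sqnorm_gt0 row_unit_neq0.
have [s s_gt0 s2] : exists2 s : 'rV[R]_3, (forall j, 0 < s 0 j) & forall j, s 0 j ^+ 2 = d 0 j.
  exists (\row_j Num.sqrt (d 0 j)) => j; rewrite mxE ?sqrtr_gt0 ?sqr_sqrtr //.
  exact: ltW.
have s_le j k : d 0 j <= d 0 k -> s 0 j <= s 0 k.
  by rewrite -!s2; have := s_gt0 j; have := s_gt0 k; nra.
pose U := G^T *m diag_mx (\row_j (s 0 j)^-1).
have UsG : U *m diag_mx s = G^T.
  rewrite -mulmxA mulmx_diag -[RHS]mulmx1 -diag_const_mx; congr (_ *m diag_mx _).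
  by apply/rowP => j; rewrite !mxE mulVf ?gt_eqF.
have UtU : U^T *m U = 1%:M.
  rewrite trmx_mul tr_diag_mx trmxK -mulmxA (mulmxA G) GGt !mulmx_diag -diag_const_mx.
  congr diag_mx; apply/rowP => j; rewrite !mxE -s2.
  by field; rewrite gt_eqF.
exists (s 0 i0, s 0 i1, s 0 i2); split; [exact: s_le | exact: s_le | exact: ltW |].
exists U, V; split=> //; first exact: mulmx1C.
rewrite (_ : diag_mx _ = diag_mx s); last first.
  by congr diag_mx; apply/rowP => j; rewrite !mxE; case: (ord3P j) => ->.
by rewrite UsG trmx_mul trmxK -mulmxA VtV mulmx1.
Qed.

Lemma singvals_spec M : M \in unitmx -> is_singular_values M (singvals M).
Proof. by move=> uM; apply: xgetPex; exact: singular_values_exist. Qed.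

Lemma singular_values_sqnorm M a1 a2 a3 : is_singular_values M (a1, a2, a3) ->
  exists2 V : 'M[R]_3, V *m V^T = 1%:M & forall y,
    sqnorm (y *m V *m M^T) = y 0 i0 ^+ 2 * a1 ^+ 2 + y 0 i1 ^+ 2 * a2 ^+ 2 + y 0 i2 ^+ 2 * a3 ^+ 2.
Proof.
case=> _ _ _ [U [V [UUt VVt ->]]]; exists V => // y.
rewrite !trmx_mul tr_diag_mx !mulmxA -(mulmxA y) VVt mulmx1 sqnorm_mulmx_orthogonal.
  by rewrite sqnorm_mul_diag sum3 !mxE.
by rewrite trmxK; exact: mulmx1C.
Qed.

End SingularValueDecomposition.

Section SingularValueBounds.
Variable R : realType.
Implicit Types (x y : 'rV[R]_3) (M P Q : 'M[R]_3).

Definition sv1 M := (singvals M).1.1.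
Definition sv2 M := (singvals M).1.2.
Definition sv3 M := (singvals M).2.

Section UnitMatrix.
Variable M : 'M[R]_3.
Hypothesis uM : M \in unitmx.

Let sv_spec : is_singular_values M (sv1 M, sv2 M, sv3 M).
Proof. by rewrite /sv1 /sv2 /sv3; case: (singvals M) (singvals_spec uM) => [[]]. Qed.

Lemma sv_ordered : [/\ 0 <= sv3 M, sv3 M <= sv2 M & sv2 M <= sv1 M].
Proof. by case: sv_spec. Qed.

Lemma sv_sqnorm_bounds x :
  sv3 M ^+ 2 * sqnorm x <= sqnorm (x *m M^T) <= sv1 M ^+ 2 * sqnorm x.
Proof.
have [V VVt sqnormE'] := singular_values_sqnorm sv_spec.
have [h3 h32 h21] := sv_ordered.
set y := x *m V^T.
have -> : x = y *m V by rewrite -mulmxA (mulmx1C VVt) mulmx1.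
rewrite sqnormE' sqnorm_mulmx_orthogonal // sqnormE sum3.
have p32 : sv3 M ^+ 2 <= sv2 M ^+ 2 by rewrite ler_sqr ?nnegrE //; lra.
have p21 : sv2 M ^+ 2 <= sv1 M ^+ 2 by rewrite ler_sqr ?nnegrE //; lra.
have := sqr_ge0 (y 0 i0); have := sqr_ge0 (y 0 i1); have := sqr_ge0 (y 0 i2).
by move=> *; apply/andP; split; nra.
Qed.

Lemma sv1_attained : exists2 x, sqnorm x = 1 & sqnorm (x *m M^T) = sv1 M ^+ 2.
Proof.
have [V VVt sqnormE'] := singular_values_sqnorm sv_spec.
exists (delta_mx 0 i0 *m V); first by rewrite sqnorm_mulmx_orthogonal // sqnorm_delta.
by rewrite sqnormE' !mxE /=; ring.
Qed.

Lemma sv3_attained : exists2 x, sqnorm x = 1 & sqnorm (x *m M^T) = sv3 M ^+ 2.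
Proof.
have [V VVt sqnormE'] := singular_values_sqnorm sv_spec.
exists (delta_mx 0 i2 *m V); first by rewrite sqnorm_mulmx_orthogonal // sqnorm_delta.
by rewrite sqnormE' !mxE /=; ring.
Qed.

Lemma sv_prod_sqr : (sv1 M * sv2 M * sv3 M) ^+ 2 = \det M ^+ 2.
Proof.
case: sv_spec => _ _ _ [U [V [UUt VVt MUDV]]].
have det_sqr1 (W : 'M[R]_3) : W *m W^T = 1%:M -> \det W ^+ 2 = 1.
  by move=> WWt; rewrite expr2 -{2}det_tr -det_mulmx WWt det1.
by rewrite [in RHS]MUDV !det_mulmx det_diag prod3 !mxE /= !exprMn !det_sqr1 //; ring.
Qed.

Lemma sv3_gt0 : 0 < sv3 M.
Proof.
have [h3 _ _] := sv_ordered; rewrite lt_def h3 andbT.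
apply: contraTneq uM => s0.
by rewrite unitmxE unitfE negbK -sqrf_eq0 -sv_prod_sqr s0 mulr0 expr0n.
Qed.

Lemma sv1_gt0 : 0 < sv1 M.
Proof. by have [_ h32 h21] := sv_ordered; have := sv3_gt0; lra. Qed.

End UnitMatrix.

Lemma det1_unitmx M : \det M = 1 -> M \in unitmx.
Proof. by move=> dM; rewrite unitmxE dM unitr1. Qed.

Lemma sv_prod_det1 M : \det M = 1 -> sv1 M * sv2 M * sv3 M = 1.
Proof.
move=> dM; have uM := det1_unitmx dM; have := sv_prod_sqr uM; rewrite dM expr1n.
have [h3 h32 h21] := sv_ordered uM.
have : 0 <= sv1 M * sv2 M * sv3 M by rewrite !mulr_ge0 //; lra.
by nra.
Qed.

Lemma sv1_mul P Q : P \in unitmx -> Q \in unitmx -> sv1 (P *m Q) <= sv1 P * sv1 Q.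
Proof.
move=> uP uQ; have uPQ : P *m Q \in unitmx by rewrite unitmx_mul uP uQ.
have [x x1 xmax] := sv1_attained uPQ.
have gPQ := ltW (sv1_gt0 uPQ); have gP := ltW (sv1_gt0 uP); have gQ := ltW (sv1_gt0 uQ).
rewrite -ler_sqr ?nnegrE ?mulr_ge0 // -xmax trmx_mul mulmxA exprMn.
have /andP [_ hP] := sv_sqnorm_bounds uP (x *m Q^T).
have /andP [_ hQ] := sv_sqnorm_bounds uQ x.
by apply: (le_trans hP); rewrite x1 mulr1 in hQ; rewrite ler_wpM2l ?sqr_ge0.
Qed.

Lemma sv1_invmx M : M \in unitmx -> sv1 (invmx M) = (sv3 M)^-1.
Proof.
move=> uM; have uMV : invmx M \in unitmx by rewrite unitmx_inv.
have MVK y : y *m (invmx M)^T *m M^T = y by rewrite -mulmxA -trmx_mul mulmxV // trmx1 mulmx1.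
have MKV y : y *m M^T *m (invmx M)^T = y by rewrite -mulmxA -trmx_mul mulVmx // trmx1 mulmx1.
have [x1 x1n x1max] := sv1_attained uMV.
have [x3 x3n x3min] := sv3_attained uM.
have le1 : (sv1 (invmx M) * sv3 M) ^+ 2 <= 1.
  have /andP [h _] := sv_sqnorm_bounds uM (x1 *m (invmx M)^T).
  by rewrite exprMn mulrC; move: h; rewrite MVK x1n x1max.
have ge1 : 1 <= (sv1 (invmx M) * sv3 M) ^+ 2.
  have /andP [_ h] := sv_sqnorm_bounds uMV (x3 *m M^T).
  by rewrite exprMn; move: h; rewrite MKV x3n x3min.
have := sv1_gt0 uMV; have := sv3_gt0 uM => h3 h1.
apply: (mulIf (lt0r_neq0 h3)); rewrite mulVf ?lt0r_neq0 //.
have p0 : 0 <= sv1 (invmx M) * sv3 M by rewrite mulr_ge0 ?ltW.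
by apply/eqP; rewrite eq_le; apply/andP; split; nra.
Qed.

Lemma sv1_sqr_le_frob M : M \in unitmx -> sv1 M ^+ 2 <= frob M.
Proof.
move=> uM; have [x x1 <-] := sv1_attained uM.
by rewrite -[frob M]mulr1 -x1 sqnorm_mul_le_frob.
Qed.

Lemma frob_le_sv1_sqr M : M \in unitmx -> frob M <= 3 * sv1 M ^+ 2.
Proof.
move=> uM; rewrite frob_colsE sum3.
have bound j : sqnorm (delta_mx 0 j *m M^T) <= sv1 M ^+ 2.
  by have /andP [_] := sv_sqnorm_bounds uM (delta_mx 0 j); rewrite sqnorm_delta mulr1.
by have := bound i0; have := bound i1; have := bound i2; lra.
Qed.

End SingularValueBounds.

Section PhiMonomial.
Variable R : realType.
Implicit Types (s : R) (M : 'M[R]_3).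

Lemma inv_powR (x r : R) : 0 <= x -> x^-1 `^ r = (x `^ r)^-1.
Proof. by move=> x0; rewrite -powR_inv1 // -powRrM mulN1r powRN. Qed.

Definition phi_exp_inv s := if s <= 1 then s else if s <= 2 then 2 - s else 0.
Definition phi_exp_top s := if s <= 1 then 2 * s else if s <= 2 then s + 1 else 3 * s.

Lemma phi_exp_inv_ge0 s : 0 <= s -> 0 <= phi_exp_inv s.
Proof.
by move=> s0; rewrite /phi_exp_inv; case: ifP => // _; case: ifP => // s2; rewrite subr_ge0.
Qed.

Lemma phi_exp_top_ge0 s : 0 <= s -> 0 <= phi_exp_top s.
Proof.
by move=> s0; rewrite /phi_exp_top; case: ifP => _; [|case: ifP => _];
  rewrite ?mulr_ge0 ?addr_ge0.
Qed.

Lemma phi_monomial s (a1 a2 a3 : R) : 0 < a1 -> 0 < a3 -> a1 * a2 * a3 = 1 ->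
  (if s <= 1 then (a2 / a1) `^ s
   else if s <= 2 then a2 / a1 * (a3 / a1) `^ (s - 1)
   else (a2 * a3 / a1 ^+ 2) `^ s) = a3^-1 `^ phi_exp_inv s / a1 `^ phi_exp_top s.
Proof.
move=> a1_gt0 a3_gt0 prod1.
have a1n : a1 != 0 by rewrite gt_eqF.
have a3n : a3 != 0 by rewrite gt_eqF.
have a2E : a2 = (a1 * a3)^-1.
  by apply: (mulIf (mulf_neq0 a1n a3n)); rewrite mulVf ?mulf_neq0 // -prod1; ring.
rewrite /phi_exp_inv /phi_exp_top; case: ifP => s1; [|case: ifP => s2].
- have -> : a2 / a1 = a3^-1 * (a1 ^+ 2)^-1 by rewrite a2E invfM; field; rewrite a1n a3n.
  rewrite powRM ?invr_ge0 ?sqr_ge0 ?ltW // (@inv_powR (a1 ^+ 2) s (sqr_ge0 _)).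
  by rewrite -(powR_mulrn 2 (ltW a1_gt0)) -powRrM.
- have E1 : a3^-1 `^ (2 - s) = a3 `^ (s - 1) / a3.
    rewrite inv_powR ?ltW // (_ : 2 - s = 1 - (s - 1)); last by ring.
    by rewrite [in LHS]powRB ?a3n ?implybT // powRr1 ?ltW // invf_div.
  have E2 : a1 `^ (s + 1) = a1 ^+ 2 * a1 `^ (s - 1).
    rewrite (_ : s + 1 = 2%:R + (s - 1)); last by ring.
    by rewrite [LHS]powRD ?a1n ?implybT // powR_mulrn // ltW.
  rewrite E1 E2 powRM ?invr_ge0 ?ltW // inv_powR ?ltW // a2E.
  by field; rewrite a1n a3n !gt_eqF ?powR_gt0.
- have -> : a2 * a3 / a1 ^+ 2 = (a1 ^+ 3)^-1 by rewrite a2E; field; rewrite a1n a3n.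
  rewrite inv_powR ?exprn_ge0 ?ltW // powRr0 mul1r.
  by rewrite -(powR_mulrn 3 (ltW a1_gt0)) -powRrM.
Qed.

Lemma phi_det1 s M : \det M = 1 ->
  phi s M = sv1 (invmx M) `^ phi_exp_inv s / sv1 M `^ phi_exp_top s.
Proof.
move=> dM; have uM := det1_unitmx dM.
rewrite sv1_invmx //; move: (sv1_gt0 uM) (sv3_gt0 uM) (sv_prod_det1 dM).
rewrite /phi /sv1 /sv2 /sv3; case: (singvals M) => [[a1 a2] a3] /=.
exact: phi_monomial.
Qed.

End PhiMonomial.

Section Words.
Variable R : realType.
Variables (I : Type) (A : I -> 'M[R]_3).

Lemma word_mx_cat u w : word_mx A (u ++ w) = word_mx A u *m word_mx A w.
Proof. by elim: u => [|i u IH] /=; rewrite ?mul1mx // IH mulmxA. Qed.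

Lemma word_mx_det1 : (forall i, \det (A i) = 1) -> forall u, \det (word_mx A u) = 1.
Proof. by move=> dA; elim=> [|i u IH] /=; rewrite ?det1 // det_mulmx dA IH mulr1. Qed.

Lemma word_mx_unit : (forall i, A i \in unitmx) -> forall u, word_mx A u \in unitmx.
Proof. by move=> uA; elim=> [|i u IH] /=; rewrite ?unitmx1 // unitmx_mul uA IH. Qed.

End Words.

Lemma invmx_mul (R : comUnitRingType) n (M N : 'M[R]_n) :
  M \in unitmx -> N \in unitmx -> invmx (M *m N) = invmx N *m invmx M.
Proof.
move=> uM uN; have uMN : M *m N \in unitmx by rewrite unitmx_mul uM uN.
have MNK : M *m N *m (invmx N *m invmx M) = 1%:M.
  by rewrite mulmxA -(mulmxA M) mulmxV // mulmx1 mulmxV.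
by rewrite -[invmx _]mulmx1 -MNK mulmxA mulVmx // mul1mx.
Qed.

Section Irreducibility.
Variable R : realType.

Lemma pred_row_space n (W : 'rV[R]_n -> Prop) : W 0 ->
  (forall a x y, W x -> W y -> W (a *: x + y)) ->
  exists V : 'M[R]_n, forall y, W y <-> (y <= V)%MS.
Proof.
move=> W0 WC.
have W_comb m (D : 'rV[R]_m) (X : 'M[R]_(m, n)) : (forall j, W (row j X)) -> W (D *m X).
  by move=> WX; rewrite mulmx_sum_row; elim/big_rec: _ => // j y _; exact: WC.
pose rank_in_W (r : nat) := `[< exists V : 'M[R]_n, (forall i, W (row i V)) /\ \rank V = r >].
have rank_ex : exists r, rank_in_W r.
  by exists 0%N; apply/asboolP; exists 0; split; [move=> i; rewrite row0 | exact: mxrank0].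
have rank_le r : rank_in_W r -> (r <= n)%N.
  by move=> /asboolP [V [_ <-]]; exact: rank_leq_row.
have [r /asboolP [V [WV rV]] rmax] := ex_maxnP rank_ex rank_le.
exists V => y; split=> [Wy|/submxP [D ->]]; last by apply: W_comb => i; exact: WV.
apply: contraT => yV.
have WVy i : W (row i (V + y)%MS).
  have /submxP [D ->] : (row i (V + y)%MS <= col_mx V y)%MS.
    by rewrite -addsmxE row_sub.
  rewrite -[D]hsubmxK mul_row_col -[lsubmx D *m V]scale1r.
  apply: WC; first exact: W_comb.
  by apply: W_comb => j; rewrite (_ : row j y = y) //; apply/rowP => k; rewrite mxE (ord1 j).
have rVy : (r < \rank (V + y)%MS)%N.
  rewrite -rV; apply: rank_ltmx; rewrite ltmxE addsmxSl /=.
  by apply: contra yV; apply: submx_trans (addsmxSr V y).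
have rVy_in : rank_in_W (\rank (V + y)%MS) by apply/asboolP; exists (V + y)%MS.
by have := rmax _ rVy_in; rewrite leqNgt rVy.
Qed.

Lemma stablemx_invmx n (V B : 'M[R]_n) :
  B \in unitmx -> stablemx V B -> stablemx V (invmx B).
Proof.
move=> uB VB; have rVB : \rank (V *m B) = \rank V by rewrite mxrankMfree // row_free_unit.
have := (mxrank_leqif_eq VB).2; rewrite rVB eqxx => /esym /andP [_ VVB].
by have := submxMr (invmx B) VVB; rewrite mulmxK.
Qed.

Lemma irreducible_invariant_pred (I : Type) (A : I -> 'M[R]_3) (W : 'rV[R]_3 -> Prop) :
  irreducible A -> (forall i, A i \in unitmx) ->
  W 0 -> (forall a x y, W x -> W y -> W (a *: x + y)) ->
  (forall i y, W y -> W (y *m (invmx (A i))^T)) ->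
  (forall y, W y) \/ (forall y, W y -> y = 0).
Proof.
move=> irrA uA W0 WC WA.
have [V WV] := pred_row_space W0 WC.
have VA i : stablemx V (A i)^T.
  rewrite -[(A i)^T]invmxK -trmx_inv; apply: stablemx_invmx.
    by rewrite unitmx_tr unitmx_inv.
  by apply/row_subP => j; rewrite row_mul; apply/WV/WA/WV; exact: row_sub.
case: (ltnP 0 (\rank V)) => [rV0|]; last first.
  rewrite leqn0 mxrank_eq0 => /eqP V0; right => y /WV.
  by rewrite V0 submx0 => /eqP.
case: (ltnP (\rank V) 3) => [rV3|rV3].
  by exfalso; apply: (irrA V) VA; rewrite rV0 rV3.
left => y; apply/WV/submx_full.
by rewrite /row_full eqn_leq rank_leq_col rV3.
Qed.

Lemma irreducible_nondegenerate (I : Type) (A : I -> 'M[R]_3) :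
  irreducible A -> (forall i, A i \in unitmx) ->
  forall P Q : 'M[R]_3, P != 0 -> Q != 0 ->
  exists k, P *m invmx (word_mx A k) *m Q != 0.
Proof.
move=> irrA uA P Q P0 Q0.
have [//|no_k] := pselect (exists k, P *m invmx (word_mx A k) *m Q != 0); exfalso.
have PkQ k : P *m invmx (word_mx A k) *m Q = 0.
  by apply/eqP/negPn/negP => PkQ0; apply: no_k; exists k.
pose W (y : 'rV[R]_3) := forall k, y *m (P *m invmx (word_mx A k))^T = 0.
have W0 : W 0 by move=> k; rewrite mul0mx.
have WC a x y : W x -> W y -> W (a *: x + y).
  by move=> Wx Wy k; rewrite mulmxDl -scalemxAl Wx Wy scaler0 addr0.
have WA i y : W y -> W (y *m (invmx (A i))^T).
  move=> Wy k; rewrite -mulmxA -trmx_mul -mulmxA -invmx_mul ?uA ?word_mx_unit //.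
  exact: (Wy (i :: k)).
case: (irreducible_invariant_pred irrA uA W0 WC WA) => [Wall|Wtriv].
  move/eqP: P0; apply; apply/matrixP => i j.
  move/rowP/(_ i): (Wall (delta_mx 0 j) [::]).
  by rewrite /= invmx1 mulmx1 -rowE !mxE.
move/eqP: Q0; apply; apply/matrixP => i j.
have Qj0 : (col j Q)^T = 0.
  by apply: Wtriv => k; rewrite -trmx_mul colE mulmxA PkQ mul0mx trmx0.
by move/rowP/(_ i): Qj0; rewrite !mxE.
Qed.

End Irreducibility.

Section UniformNondegeneracy.
Variable R : realType.
Local Open Scope classical_set_scope.
Variables (n : nat) (J : choiceType) (D : J -> 'M[R]_n).
Implicit Types (P Q : 'M[R]_n).
Hypothesis D_nondeg : forall P Q, P != 0 -> Q != 0 -> exists k, P *m D k *m Q != 0.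

(* A pair (P, Q) is encoded as the row vector row_mx (mxvec P) (mxvec Q), since closed
   bounded sets of row vectors are compact. *)
Lemma compact_unit_frob_pairs : compact [set x : 'rV[R]_(n * n + n * n) |
  frob (vec_mx (lsubmx x) : 'M[R]_n) = 1 /\ frob (vec_mx (rsubmx x) : 'M[R]_n) = 1].
Proof.
apply: (@compact_sqnorm_bounded _ _ _ 2).
  apply: closedI; apply: closed_eq_continuous; apply: continuous_frob;
    [exact: entrywise_continuous_vec_lsubmx | exact: entrywise_continuous_vec_rsubmx].
move=> x [P1 Q1]; rewrite -[x]hsubmxK sqnorm_row_mx.
by rewrite -(vec_mxK (lsubmx x)) -(vec_mxK (rsubmx x)) !sqnorm_mxvec P1 Q1.
Qed.

Lemma nondegenerate_uniform_sphere : exists (G : seq J) (c : R), 0 < c /\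
  forall P Q, frob P = 1 -> frob Q = 1 -> exists2 k, k \in G & c < frob (P *m D k *m Q).
Proof.
pose P_of (x : 'rV[R]_(n * n + n * n)) : 'M[R]_n := vec_mx (lsubmx x).
pose Q_of (x : 'rV[R]_(n * n + n * n)) : 'M[R]_n := vec_mx (rsubmx x).
pose K := [set x | frob (P_of x) = 1 /\ frob (Q_of x) = 1].
have cK : compact K := compact_unit_frob_pairs.
pose fam (p : J * nat) := [set x | p.2.+1%:R^-1 < frob (P_of x *m D p.1 *m Q_of x)].
have ofam p : open (fam p).
  apply: open_gt_continuous; apply: continuous_frob.
  apply: entrywise_continuous_mul; last exact: entrywise_continuous_vec_rsubmx.
  apply: entrywise_continuous_mul; first exact: entrywise_continuous_vec_lsubmx.
  exact: entrywise_continuous_cst.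
have Kcov : K `<=` \bigcup_(p in setT) fam p.
  move=> x [P1 Q1].
  have P0 : P_of x != 0 by rewrite -frob_gt0 P1.
  have Q0 : Q_of x != 0 by rewrite -frob_gt0 Q1.
  have [k PkQ] := D_nondeg P0 Q0.
  exists (k, Num.truncn (frob (P_of x *m D k *m Q_of x))^-1) => //=.
  by rewrite /fam /= invf_plt ?posrE ?ltr0n ?frob_gt0 // truncnS_gt.
have := cK; rewrite compact_cover => /(_ _ setT fam (fun p _ => ofam p) Kcov) [F _ FK].
pose N := (\max_(p <- finmap.enum_fset F) p.2)%N.
exists [seq p.1 | p <- finmap.enum_fset F], N.+1%:R^-1; split=> [|P Q P1 Q1].
  by rewrite invr_gt0 ltr0n.
have KPQ : K (row_mx (mxvec P) (mxvec Q)).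
  by rewrite /K /P_of /Q_of /= row_mxKl row_mxKr !mxvecK.
have [p pF fam_p] := FK _ KPQ.
exists p.1; first exact: map_f.
move: fam_p; rewrite /fam /P_of /Q_of /= row_mxKl row_mxKr !mxvecK; apply: le_lt_trans.
by rewrite lef_pV2 ?posrE ?ltr0n // ler_nat ltnS; exact: leq_bigmax_seq.
Qed.

Lemma nondegenerate_uniform : exists (G : seq J) (c : R), 0 < c /\
  forall P Q, P != 0 -> Q != 0 ->
  exists2 k, k \in G & c * frob P * frob Q <= frob (P *m D k *m Q).
Proof.
have [G [c [c0 HG]]] := nondegenerate_uniform_sphere.
exists G, c; split=> // P Q P0 Q0.
have [k kG] := HG _ _ (frob_normalize P0) (frob_normalize Q0).
rewrite -!scalemxAl -!scalemxAr scalerA frobZ exprMn !exprVn !sqr_sqrtr ?frob_ge0 // => /ltW ck.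
exists k => //.
have gP : 0 < frob P by rewrite frob_gt0.
have gQ : 0 < frob Q by rewrite frob_gt0.
rewrite -!ler_pdivlMr //; apply: le_trans ck _.
by rewrite mulrC mulrA mulrAC.
Qed.

End UniformNondegeneracy.

Lemma powR_quotient_supermul (R : realType) (p q c K x1 y1 x2 y2 x y : R) :
  0 <= p -> 0 <= q -> 0 < c -> 0 < K -> 0 <= x1 -> 0 <= x2 ->
  0 < y1 -> 0 < y2 -> 0 < y ->
  c * x1 * x2 <= x -> y <= K * y1 * y2 ->
  c `^ p / K `^ q * (x1 `^ p / y1 `^ q) * (x2 `^ p / y2 `^ q) <= x `^ p / y `^ q.
Proof.
move=> p0 q0 c0 K0 x10 x20 y10 y20 y0 le_x le_y.
have [c0' K0' y10' y20'] := And4 (ltW c0) (ltW K0) (ltW y10) (ltW y20).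
have x0 : 0 <= x by apply: le_trans le_x; rewrite !mulr_ge0.
have num : c `^ p * x1 `^ p * x2 `^ p <= x `^ p.
  rewrite -!powRM ?mulr_ge0 //.
  by apply: (ge0_ler_powR p0); rewrite ?nnegrE ?mulr_ge0.
have den : (K `^ q * y1 `^ q * y2 `^ q)^-1 <= (y `^ q)^-1.
  rewrite lef_pV2 ?posrE ?mulr_gt0 ?powR_gt0 // -!powRM ?mulr_ge0 //.
  by apply: (ge0_ler_powR q0); rewrite ?nnegrE ?mulr_ge0 // ltW.
have -> : c `^ p / K `^ q * (x1 `^ p / y1 `^ q) * (x2 `^ p / y2 `^ q) =
    c `^ p * x1 `^ p * x2 `^ p * (K `^ q * y1 `^ q * y2 `^ q)^-1.
  by rewrite !invfM; ring.
by apply: ler_pM; rewrite ?invr_ge0 ?mulr_ge0 ?powR_ge0.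
Qed.

Section QuasiMultiplicativity.
Variable R : realType.
Variables (I : countType) (A : I -> 'M[R]_3).
Hypothesis detA : forall i, \det (A i) = 1.

Let uA i : A i \in unitmx := det1_unitmx (detA i).
Let unit_word u : word_mx A u \in unitmx := word_mx_unit uA u.

Lemma sv1_word_submul (G : seq (seq I)) : exists2 K : R, 0 < K &
  forall u k w, k \in G ->
  sv1 (word_mx A (u ++ k ++ w)) <= K * sv1 (word_mx A u) * sv1 (word_mx A w).
Proof.
pose K := \big[Num.max/1]_(k <- G) sv1 (word_mx A k).
have K1 : 1 <= K by rewrite /K; elim/big_rec: _ => // k y _; rewrite le_max => ->; rewrite orbT.
exists K => [|u k w kG]; first by apply: lt_le_trans K1.
have le_K : sv1 (word_mx A k) <= K.
  by apply: (le_bigmax_seq _ _ xpredT (fun k => sv1 (word_mx A k))).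
have sv1_ge0 v : 0 <= sv1 (word_mx A v) by exact/ltW/sv1_gt0.
have uuk : word_mx A u *m word_mx A k \in unitmx by rewrite unitmx_mul !unit_word.
rewrite !word_mx_cat mulmxA; apply: le_trans (sv1_mul uuk (unit_word w)) _.
apply: ler_wpM2r => //; apply: le_trans (sv1_mul (unit_word u) (unit_word k)) _.
by rewrite mulrC ler_wpM2r.
Qed.

Lemma sv1_inv_word_supermul : irreducible A -> exists (G : seq (seq I)) (c : R), 0 < c /\
  forall u w, exists2 k, k \in G &
  c * sv1 (invmx (word_mx A u)) * sv1 (invmx (word_mx A w))
    <= sv1 (invmx (word_mx A (u ++ k ++ w))).
Proof.
move=> irrA; have [G [c [c0 HG]]] := nondegenerate_uniform (irreducible_nondegenerate irrA uA).
exists G, (Num.sqrt (c / 3)); split=> [|u w]; first by rewrite sqrtr_gt0 divr_gt0.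
have unit_inv v : invmx (word_mx A v) \in unitmx by rewrite unitmx_inv.
have inv_neq0 v : invmx (word_mx A v) != 0.
  by apply: contraTneq (unit_inv v) => ->; rewrite unitmxE det0 unitr0.
have [k kG ck] := HG _ _ (inv_neq0 w) (inv_neq0 u); exists k => //.
rewrite !word_mx_cat !invmx_mul ?unitmx_mul ?unit_word //.
set P := invmx (word_mx A w) in ck *; set Q := invmx (word_mx A u) in ck *.
set X := P *m _ *m Q in ck *.
have uX : X \in unitmx by rewrite !unitmx_mul !unitmx_inv !unit_word.
have [gP gQ gX] :=
  And3 (ltW (sv1_gt0 (unit_inv w))) (ltW (sv1_gt0 (unit_inv u))) (ltW (sv1_gt0 uX)).
have c3 : 0 <= c / 3 by rewrite divr_ge0 ?ltW.
rewrite -ler_sqr ?nnegrE ?mulr_ge0 ?sqrtr_ge0 // !exprMn sqr_sqrtr //.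
apply: (@le_trans _ _ (c / 3 * (frob Q * frob P))).
  rewrite -mulrA ler_pM2l ?divr_gt0 //.
  by apply: ler_pM; rewrite ?sqr_ge0 ?sv1_sqr_le_frob ?unit_inv.
have := frob_le_sv1_sqr uX.
have -> : c / 3 * (frob Q * frob P) = c * frob P * frob Q / 3 by ring.
by move: ck; set z := c * _ * _; lra.
Qed.

End QuasiMultiplicativity.

Theorem corollary2p3 (R : realType) (I : countType) (A : I -> 'M[R]_3) :
  (forall i, \det (A i) = 1) ->
  irreducible A ->
  forall s : R, 0 <= s -> quasimultiplicative A (phi s).
Proof.
move=> detA irrA s s0.
have [G [c [c0 supermul]]] := sv1_inv_word_supermul detA irrA.
have [K K0 submul] := sv1_word_submul detA G.
exists G, (c `^ phi_exp_inv s / K `^ phi_exp_top s); split=> [|u w].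
  by rewrite divr_gt0 ?powR_gt0.
have [k kG ck] := supermul u w; exists k => //.
have unit_word v : word_mx A v \in unitmx := det1_unitmx (word_mx_det1 detA v).
have inv_ge0 v : 0 <= sv1 (invmx (word_mx A v)) by rewrite ltW // sv1_gt0 // unitmx_inv.
rewrite !phi_det1 ?word_mx_det1 //.
by apply: powR_quotient_supermul; rewrite ?phi_exp_inv_ge0 ?phi_exp_top_ge0 ?sv1_gt0 ?submul.
Qed.
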